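(* Consider the system $\mathbf{x}_{k+1}=f_k(\mathbf{x}_k,\mathbf{w}_k)$, $\mathbf{y}_k=g_k(\mathbf{x}_k,\mathbf{v}_k)$, $k\in\mathbb{N}_0$, and assume that for every $k\in\mathbb{N}_0$ the uncertain variables $\mathbf{w}_0,\dots,\mathbf{w}_k,\mathbf{v}_0,\dots,\mathbf{v}_k,\mathbf{x}_0$ are unrelated. Then for every $k\in\mathbb{Z}_+$ and every $(x_{0:k-1},y_{0:k-1})\in\llbracket\mathbf{x}_{0:k-1},\mathbf{y}_{0:k-1}\rrbracket$, \[ \llbracket\mathbf{x}_k\,|\,x_{0:k-1},y_{0:k-1}\rrbracket=\llbracket\mathbf{x}_k\,|\,x_{k-1}\rrbracket, \] and for every $k\in\mathbb{N}_0$ and every $(x_{0:k},y_{0:k-1})\in\llbracket\mathbf{x}_{0:k},\mathbf{y}_{0:k-1}\rrbracket$, \[ \llbracket\mathbf{y}_k\,|\,x_{0:k},y_{0:k-1}\rrbracket=\llbracket\mathbf{y}_k\,|\,x_k\rrbracket . \]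
   Context: Uncertain variables: fix a nonempty set $\Omega$. An uncertain variable is a (measurable) function $\mathbf{x}\colon\Omega\to\mathcal{X}$; a realization is $x=\mathbf{x}(\omega)$. Tuples such as $\mathbf{x}_{0:k}:=(\mathbf{x}_0,\dots,\mathbf{x}_k)$ are regarded as uncertain variables $\omega\mapsto(\mathbf{x}_0(\omega),\dots,\mathbf{x}_k(\omega))$. Range: $\llbracket\mathbf{x}\rrbracket:=\{\mathbf{x}(\omega):\omega\in\Omega\}$; joint range $\llbracket\mathbf{u}_1,\dots,\mathbf{u}_r\rrbracket:=\{(\mathbf{u}_1(\omega),\dots,\mathbf{u}_r(\omega)):\omega\in\Omega\}$. Conditional range: $\llbracket\mathbf{x}\,|\,y\rrbracket:=\{\mathbf{x}(\omega):\omega\in\Omega,\ \mathbf{y}(\omega)=y\}$ (conditioning on several values means conditioning on the tuple); for $k=0$ the conditioning on $y_{0:-1}$ is empty. Unrelatedness: $\mathbf{u}_1,\dots,\mathbf{u}_r$ are unrelated if $\llbracket\mathbf{u}_1,\dots,\mathbf{u}_r\rrbracket=\llbracket\mathbf{u}_1\rrbracket\times\cdots\times\llbracket\mathbf{u}_r\rrbracket$. System: $f_k\colon\llbracket\mathbf{x}_k\rrbracket\times\llbracket\mathbf{w}_k\rrbracket\to\llbracket\mathbf{x}_{k+1}\rrbracket$, $g_k\colon\llbracket\mathbf{x}_k\rrbracket\times\llbracket\mathbf{v}_k\rrbracket\to\llbracket\mathbf{y}_k\rrbracket$ are maps, with state, process noise, measurement and measurement noise valued in Euclidean spaces, and $\mathbf{x}_{k+1}(\omega)=f_k(\mathbf{x}_k(\omega),\mathbf{w}_k(\omega))$,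 $\mathbf{y}_k(\omega)=g_k(\mathbf{x}_k(\omega),\mathbf{v}_k(\omega))$ for all $\omega\in\Omega$. *)

From HB Require Import structures.
From mathcomp Require Import all_boot all_order all_algebra.
From mathcomp Require Export classical_sets reals.
Set Implicit Arguments. Unset Strict Implicit. Unset Printing Implicit Defensive.
Local Open Scope classical_set_scope.

Definition condRange (Omega X Y : Type) (u : Omega -> X) (cond : Omega -> Y) (c : Y)
  : set X := [set u om | om in [set om | cond om = c]].

Definition tup (Omega T : Type) (u : nat -> Omega -> T) (k : nat)
  : Omega -> ('I_k -> T) := fun om i => u (nat_of_ord i) om.
Arguments tup {Omega T} u k om i.

(* Unrelatedness of w_0..w_k, v_0..v_k, x_0: the joint range equals the
   product of the individual ranges. *)
Definition unrelated_wvx (Omega A B C : Type) (k : nat)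
  (w : nat -> Omega -> A) (v : nat -> Omega -> B) (x0 : Omega -> C) : Prop :=
  range (fun om => (tup w k.+1 om, tup v k.+1 om, x0 om)) =
  [set abc | (forall i : 'I_(k.+1), range (w i) (abc.1.1 i)) /\
             (forall i : 'I_(k.+1), range (v i) (abc.1.2 i)) /\
             range x0 abc.2].

From mathcomp Require Import all_boot all_order all_algebra classical_sets reals.
From mathcomp Require Import boolp.
Set Implicit Arguments. Unset Strict Implicit. Unset Printing Implicit Defensive.
Local Open Scope classical_set_scope.

(* The key tool is "splicing": since x_0, w_{0:k}, v_{0:k} are unrelated, for
   any two outcomes om0, om there is an outcome om1 whose noise components are
   taken, index by index, from om0 or from om at will (lemma [splice_noise]).
   As the states are determined by x_0 and the past process noise
   ([states_agree]), splicing the past of om0 with the present noise of om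
   yields an outcome that reproduces the whole history of om0 while behaving
   like om at time k ([splice_past]).  Each equality of the theorem then
   follows from an abstract criterion for two conditional ranges to coincide
   ([condRange_coarsen]): conditioning on the full history x_{0:k}, y_{0:k}
   (or y_{0:k-1}) is a refinement of conditioning on x_k alone, and splicing
   shows that the refinement loses no value of x_{k+1} (resp. y_k). *)

Lemma condRange_coarsen (Omega X Y Z : Type) (u : Omega -> X)
    (c : Omega -> Y) (d : Omega -> Z) (a : Y) (b : Z) :
  (forall om, c om = a -> d om = b) ->
  (forall om, d om = b -> exists2 om', c om' = a & u om' = u om) ->
  condRange u c a = condRange u d b.
Proof.
move=> refines attained; apply/seteqP; split=> _ [om /= cond_om <-].
- by exists om => //; apply: refines.
- by have [om' cond_om' <-] := attained om cond_om; exists om'.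
Qed.

Lemma splice_noise (Omega A B C : Type) (k : nat)
    (w : nat -> Omega -> A) (v : nat -> Omega -> B) (x0 : Omega -> C) :
  unrelated_wvx k w v x0 -> forall (om1 om2 : Omega) (pw pv : pred nat),
  exists om,
    [/\ forall i, (i <= k)%N -> w i om = w i (if pw i then om1 else om2),
        forall i, (i <= k)%N -> v i om = v i (if pv i then om1 else om2)
      & x0 om = x0 om1].
Proof.
move=> unrel om1 om2 pw pv.
have : range (fun om => (tup w k.+1 om, tup v k.+1 om, x0 om))
    ((fun i : 'I_k.+1 => w i (if pw i then om1 else om2)),
     (fun i : 'I_k.+1 => v i (if pv i then om1 else om2)), x0 om1).
  by rewrite unrel; split; [|split] => [i|i|]; eexists.
case=> om _ [w_om v_om x0_om]; exists om; split=> // i le_ik.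
- by have := congr1 (fun F => F (Ordinal (le_ik : (i < k.+1)%N))) w_om.
- by have := congr1 (fun F => F (Ordinal (le_ik : (i < k.+1)%N))) v_om.
Qed.

Section UncertainSystem.

Variables (Omega X W Y V : Type).
Variables (x : nat -> Omega -> X) (w : nat -> Omega -> W).
Variables (y : nat -> Omega -> Y) (v : nat -> Omega -> V).
Variables (f : nat -> X -> W -> X) (g : nat -> X -> V -> Y).
Hypothesis state_eq : forall k om, x k.+1 om = f k (x k om) (w k om).
Hypothesis unrelated : forall k, unrelated_wvx k w v (x 0%N).

Lemma states_agree (om om0 : Omega) (k : nat) :
  (forall i, (i < k)%N -> w i om = w i om0) -> x 0%N om = x 0%N om0 ->
  forall i, (i <= k)%N -> x i om = x i om0.
Proof.
move=> w_agree x0_agree; elim=> [//|i IH] lt_ik.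
by rewrite !state_eq IH ?(ltnW lt_ik) // w_agree.
Qed.

Lemma splice_past (k : nat) (om0 om : Omega) (pv : pred nat) :
  exists om1,
    [/\ forall i, (i <= k)%N -> x i om1 = x i om0,
        w k om1 = w k om
      & forall i, (i <= k)%N -> v i om1 = v i (if pv i then om0 else om)].
Proof.
have [om1 [w_om1 v_om1 x0_om1]] :=
  splice_noise (unrelated k) om0 om (fun i => (i < k)%N) pv.
exists om1; split=> //; last by rewrite w_om1 // ltnn.
by apply: states_agree => // i lt_ik; rewrite w_om1 ?(ltnW lt_ik) // lt_ik.
Qed.

Hypothesis output_eq : forall k om, y k om = g k (x k om) (v k om).

Lemma state_markov (k : nat) (om0 om : Omega) : x k om = x k om0 ->
  exists2 om1, (tup x k.+1 om1, tup y k.+1 om1) = (tup x k.+1 om0, tup y k.+1 om0)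
             & x k.+1 om1 = x k.+1 om.
Proof.
move=> same_state.
have [om1 [x_om1 w_om1 v_om1]] := splice_past k om0 om predT.
have le_ik (i : 'I_k.+1) : (i <= k)%N by rewrite -ltnS ltn_ord.
exists om1; last by rewrite !state_eq x_om1 // w_om1 same_state.
by congr pair; apply/funext => i; rewrite /tup ?output_eq x_om1 ?v_om1.
Qed.

Lemma output_markov (k : nat) (om0 om : Omega) : x k om = x k om0 ->
  exists2 om1, (tup x k.+1 om1, tup y k om1) = (tup x k.+1 om0, tup y k om0)
             & y k om1 = y k om.
Proof.
move=> same_state.
have [om1 [x_om1 _ v_om1]] := splice_past k om0 om (fun i => (i < k)%N).
exists om1; last by rewrite !output_eq x_om1 // v_om1 // ltnn same_state.
congr pair; apply/funext => i; rewrite /tup.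
  by rewrite x_om1 // -ltnS ltn_ord.
by have lt_ik := ltn_ord i; rewrite !output_eq x_om1 ?v_om1 ?(ltnW lt_ik) ?lt_ik.
Qed.

End UncertainSystem.

Theorem mainTheorem8 (R : realType) (Omega : Type) (nx nw ny nv : nat)
  (x : nat -> Omega -> 'rV[R]_nx) (w : nat -> Omega -> 'rV[R]_nw)
  (y : nat -> Omega -> 'rV[R]_ny) (v : nat -> Omega -> 'rV[R]_nv)
  (f : nat -> 'rV[R]_nx -> 'rV[R]_nw -> 'rV[R]_nx)
  (g : nat -> 'rV[R]_nx -> 'rV[R]_nv -> 'rV[R]_ny) :
  inhabited Omega ->
  (forall k om, x k.+1 om = f k (x k om) (w k om)) ->
  (forall k om, y k om = g k (x k om) (v k om)) ->
  (forall k, unrelated_wvx k w v (x 0%N)) ->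
  (forall (k : nat) (xs : 'I_k.+1 -> 'rV[R]_nx) (ys : 'I_k.+1 -> 'rV[R]_ny),
     range (fun om => (tup x k.+1 om, tup y k.+1 om)) (xs, ys) ->
     condRange (x k.+1) (fun om => (tup x k.+1 om, tup y k.+1 om)) (xs, ys)
     = condRange (x k.+1) (x k) (xs ord_max))
  /\
  (forall (k : nat) (xs : 'I_k.+1 -> 'rV[R]_nx) (ys : 'I_k -> 'rV[R]_ny),
     range (fun om => (tup x k.+1 om, tup y k om)) (xs, ys) ->
     condRange (y k) (fun om => (tup x k.+1 om, tup y k om)) (xs, ys)
     = condRange (y k) (x k) (xs ord_max)).
Proof.
move=> _ state_eq output_eq unrelated.
(* In both parts the conditioning value is the history of some outcome om0,
   and x_k is the last component of the state history. *)
split=> k _ _ [om0 _ [<- <-]]; apply: condRange_coarsen.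
- by move=> om [/(congr1 (fun xs => xs ord_max))].
- by move=> om; apply: (state_markov state_eq unrelated output_eq).
- by move=> om [/(congr1 (fun xs => xs ord_max))].
- by move=> om; apply: (output_markov state_eq unrelated output_eq).
Qed.
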